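(* Let $\mathcal P=\langle F,R\rangle$ be a program and $H$ a hypothesis. Define $IF(F,H)=\{A\mid F(A)\neq\mathcal U,\ H(A)\neq\mathcal U,\ F(A)\neq H(A)\}$, $PF_0=\emptyset$ and, for $i\ge1$, $$PF_i=\{A\mid A\leftarrow B\in R \text{ and } B\not\equiv H(A)\text{ w.r.t. } F\oplus H_{/(\mathcal{HB}_{\mathcal P}\setminus IF(F,H))\setminus PF_{i-1}}\}.$$ Then the sequence $(PF_i)_{i\ge0}$ is increasing with respect to set inclusion and reaches its limit $PF$ in a finite number of steps.
   Context: Let $\langle \mathcal{B},\le_t,\le_k\rangle$ be a complete, infinitely distributive bilattice with negation satisfying the infinitary interlacing conditions; $\wedge,\vee$ are meet/join for $\le_t$, $\otimes,\oplus$ meet/join for $\le_k$, $\mathcal U$ is the bottom of $\le_k$. A closed formula is built from ground literals and elements of $\mathcal B$ using $\wedge,\vee,\otimes,\oplus,\exists,\forall$ (quantifiers over closed terms). A program $\mathcal P=\langle F,R\rangle$ consists of a function $F$ from the Herbrand base $\mathcal{HB}_{\mathcal P}$ to $\mathcal B$ and a finite set $R$ of ground clauses $A\leftarrow B$, each ground atom being the head of at most one clause. A hypothesis (interpretation) is a function $\mathcal{HB}_{\mathcal P}\to\mathcal B$, extended to closed formulas homomorphically ($I(\neg A)=\neg I(A)$, $I(X\wedge Y)=I(X)\wedge I(Y)$ etc., $\exists$ as $\bigvee$, $\forall$ as $\bigwedge$ over closed instances). Operations on interpretations are pointwise, e.g. $(I\oplus J)(A)=I(A)\oplus J(A)$.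 $I\le J$ means $I(A)\neq\mathcal U\Rightarrow I(A)=J(A)$ for all $A$. $I_{/S}$ is $I$ on $S$ and $\mathcal U$ elsewhere. $B\equiv_I\alpha$ means $J(B)=\alpha$ for all $J$ with $I\le J$; $B\not\equiv_I\alpha$ is its negation. *)

From Stdlib Require Import List Arith ClassicalEpsilon.
Import ListNotations.
Set Implicit Arguments.

Definition is_lub {T : Type} (le : T -> T -> Prop) (S : T -> Prop) (x : T) :=
  (forall s, S s -> le s x) /\ (forall y, (forall s, S s -> le s y) -> le x y).
Definition is_glb {T : Type} (le : T -> T -> Prop) (S : T -> Prop) (x : T) :=
  (forall s, S s -> le x s) /\ (forall y, (forall s, S s -> le y s) -> le y x).

Definition partial_order {T : Type} (le : T -> T -> Prop) :=
  (forall x, le x x) /\ (forall x y z, le x y -> le y z -> le x z) /\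
  (forall x y, le x y -> le y x -> x = y).

Definition inf_distr {T : Type} (op : T -> T -> T) (big : (T -> Prop) -> T) :=
  forall x (S : T -> Prop), (exists s, S s) ->
    op x (big S) = big (fun z => exists s, S s /\ z = op x s).

Definition fam {T I : Type} (a : I -> T) : T -> Prop := fun z => exists i, z = a i.

Definition big_mono {T : Type} (le : T -> T -> Prop) (big : (T -> Prop) -> T) :=
  forall (I : Type) (a b : I -> T), (forall i, le (a i) (b i)) -> le (big (fam a)) (big (fam b)).
Definition bin_mono {T : Type} (le : T -> T -> Prop) (op : T -> T -> T) :=
  forall x y x' y', le x x' -> le y y' -> le (op x y) (op x' y').

Record bilattice := Bilattice {
  car :> Type;
  le_t : car -> car -> Prop;
  le_k : car -> car -> Prop;
  meet_t : car -> car -> car;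
  join_t : car -> car -> car;
  meet_k : car -> car -> car;
  join_k : car -> car -> car;
  sup_t : (car -> Prop) -> car;
  inf_t : (car -> Prop) -> car;
  sup_k : (car -> Prop) -> car;
  inf_k : (car -> Prop) -> car;
  neg : car -> car;
  le_t_po : partial_order le_t;
  le_k_po : partial_order le_k;
  sup_tP : forall S, is_lub le_t S (sup_t S);
  inf_tP : forall S, is_glb le_t S (inf_t S);
  sup_kP : forall S, is_lub le_k S (sup_k S);
  inf_kP : forall S, is_glb le_k S (inf_k S);
  meet_tP : forall x y, is_glb le_t (fun z => z = x \/ z = y) (meet_t x y);
  join_tP : forall x y, is_lub le_t (fun z => z = x \/ z = y) (join_t x y);
  meet_kP : forall x y, is_glb le_k (fun z => z = x \/ z = y) (meet_k x y);
  join_kP : forall x y, is_lub le_k (fun z => z = x \/ z = y) (join_k x y);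
  neg_t : forall x y, le_t x y -> le_t (neg y) (neg x);
  neg_k : forall x y, le_k x y -> le_k (neg x) (neg y);
  negK : forall x, neg (neg x) = x;
  d_mt_st : inf_distr meet_t sup_t; d_mt_sk : inf_distr meet_t sup_k;
  d_mt_ik : inf_distr meet_t inf_k;
  d_jt_it : inf_distr join_t inf_t; d_jt_sk : inf_distr join_t sup_k;
  d_jt_ik : inf_distr join_t inf_k;
  d_mk_sk : inf_distr meet_k sup_k; d_mk_st : inf_distr meet_k sup_t;
  d_mk_it : inf_distr meet_k inf_t;
  d_jk_ik : inf_distr join_k inf_k; d_jk_st : inf_distr join_k sup_t;
  d_jk_it : inf_distr join_k inf_t;
  il_mt : bin_mono le_k meet_t; il_jt : bin_mono le_k join_t;
  il_mk : bin_mono le_t meet_k; il_jk : bin_mono le_t join_k;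
  il_it : big_mono le_k inf_t; il_st : big_mono le_k sup_t;
  il_ik : big_mono le_t inf_k; il_sk : big_mono le_t sup_k
}.

Definition Ub (B : bilattice) : B := sup_k B (fun _ => False).

(* Atom: the Herbrand base (ground atoms); Term: closed terms.
   Quantified formulas are given by their family of closed instances. *)
Inductive formula (B : Type) (Atom Term : Type) : Type :=
  | FPos : Atom -> formula B Atom Term
  | FNeg : Atom -> formula B Atom Term
  | FConst : B -> formula B Atom Term
  | FAnd : formula B Atom Term -> formula B Atom Term -> formula B Atom Term
  | FOr : formula B Atom Term -> formula B Atom Term -> formula B Atom Term
  | FOtimes : formula B Atom Term -> formula B Atom Term -> formula B Atom Term
  | FOplus : formula B Atom Term -> formula B Atom Term -> formula B Atom Term
  | FEx : (Term -> formula B Atom Term) -> formula B Atom Term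
  | FAll : (Term -> formula B Atom Term) -> formula B Atom Term.

Definition interp (B : bilattice) (Atom : Type) := Atom -> car B.

Fixpoint eval (B : bilattice) (Atom Term : Type) (I : interp B Atom)
  (f : formula (car B) Atom Term) : car B :=
  match f with
  | FPos _ _ A => I A
  | FNeg _ _ A => neg B (I A)
  | FConst _ _ b => b
  | FAnd X Y => meet_t B (eval I X) (eval I Y)
  | FOr X Y => join_t B (eval I X) (eval I Y)
  | FOtimes X Y => meet_k B (eval I X) (eval I Y)
  | FOplus X Y => join_k B (eval I X) (eval I Y)
  | FEx g => sup_t B (fun b => exists t, b = eval I (g t))
  | FAll g => inf_t B (fun b => exists t, b = eval I (g t))
  end.

Record program (B : bilattice) (Atom Term : Type) := Program {
  facts : interp B Atom;
  rules : list (Atom * formula (car B) Atom Term);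
  rules_heads : NoDup (map fst rules)
}.

Definition ioplus (B : bilattice) (Atom : Type) (I J : interp B Atom) : interp B Atom :=
  fun A => join_k B (I A) (J A).

Definition restrict (B : bilattice) (Atom : Type) (I : interp B Atom) (S : Atom -> Prop)
  : interp B Atom :=
  fun A => if excluded_middle_informative (S A) then I A else Ub B.

Definition ext_le (B : bilattice) (Atom : Type) (I J : interp B Atom) : Prop :=
  forall A, I A <> Ub B -> I A = J A.

Definition equivI (B : bilattice) (Atom Term : Type) (I : interp B Atom)
  (f : formula (car B) Atom Term) (alpha : car B) : Prop :=
  forall J, ext_le I J -> eval J f = alpha.

Definition IFset (B : bilattice) (Atom : Type) (F H : interp B Atom) : Atom -> Prop :=
  fun A => F A <> Ub B /\ H A <> Ub B /\ F A <> H A.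

Fixpoint PF (B : bilattice) (Atom Term : Type) (P : program B Atom Term)
  (H : interp B Atom) (i : nat) : Atom -> Prop :=
  match i with
  | 0 => fun _ => False
  | S j => fun A => exists Bd, In (A, Bd) (rules P) /\
      ~ equivI (ioplus (facts P)
                  (restrict H (fun A' => ~ IFset (facts P) H A' /\ ~ PF P H j A')))
               Bd (H A)
  end.

(** A larger PF_(i-1) gives a [<=]-smaller interpretation
    [F (+) H_/(HB \ IF(F,H)) \ PF_(i-1)], because outside IF(F,H) a defined
    F(A) absorbs H(A); and [B ≡_I alpha] is inherited by every J with I <= J.
    So the operator producing PF_i from PF_(i-1) is monotone, and iterating it
    from the empty set yields an increasing chain.  Apart from PF_0 its members
    consist of heads of the finitely many clauses, so the chain becomes
    stationary. *)

From Stdlib Require Import List Arith Classical ClassicalEpsilon.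

Section Chains.
Context {T : Type}.

Lemma chain_le (X : nat -> T -> Prop) :
  (forall i a, X i a -> X (S i) a) -> forall i j, i <= j -> forall a, X i a -> X j a.
Proof. intros incr i j hij; induction hij; auto. Qed.

Lemma chain_in_list_stabilizes (l : list T) (X : nat -> T -> Prop) :
  (forall i a, X i a -> X (S i) a) -> (forall i a, X i a -> In a l) ->
  exists n, forall a, X (S n) a -> X n a.
Proof.
  revert X; induction l as [|b l IH]; intros X incr in_l.
  - exists 0; intros a ha; destruct (in_l 1 a ha).
  - destruct (classic (exists k, X k b)) as [[k hk]|no_b].
    + (* once b enters the chain at stage k, the rest of the tail lives in l *)
      pose (Y := fun i a => X (k + i) a /\ a <> b).
      destruct (IH Y) as [n hn].
      * intros i a [ha hab]; split; [rewrite Nat.add_succ_r; auto | exact hab].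
      * intros i a [ha hab]; destruct (in_l _ _ ha) as [->|hl]; [congruence | exact hl].
      * exists (k + n); intros a ha.
        destruct (classic (a = b)) as [->|hab].
        -- apply (chain_le X incr k); [apply Nat.le_add_r | exact hk].
        -- apply hn; split; [rewrite Nat.add_succ_r; exact ha | exact hab].
    + apply IH; [exact incr|].
      intros i a ha; destruct (in_l _ _ ha) as [->|hl]; [exfalso; eauto | exact hl].
Qed.

Section MonotoneIteration.
Variables (f : (T -> Prop) -> T -> Prop) (X : nat -> T -> Prop).
Hypothesis f_mono : forall Y Z, (forall a, Y a -> Z a) -> forall a, f Y a -> f Z a.
Hypothesis X_0 : forall a, ~ X 0 a.
Hypothesis X_S : forall i a, X (S i) a <-> f (X i) a.

Lemma iter_incr : forall i a, X i a -> X (S i) a.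
Proof.
  induction i as [|i IH]; intros a ha; [destruct (X_0 _ ha)|].
  apply X_S; apply X_S in ha; exact (f_mono _ _ IH _ ha).
Qed.

Lemma iter_stationary n :
  (forall a, X (S n) a -> X n a) -> forall m, n <= m -> forall a, X m a <-> X n a.
Proof.
  intros stuck m hnm; induction hnm as [|m _ IH]; intro a; [tauto|].
  rewrite X_S; split; intro ha.
  - apply stuck, X_S; exact (f_mono _ _ (fun a => proj1 (IH a)) _ ha).
  - apply (f_mono _ _ (fun a => proj2 (IH a))), X_S, iter_incr; exact ha.
Qed.

End MonotoneIteration.
End Chains.

Section Bilattice.
Variable B : bilattice.

Lemma Ub_le_k (x : B) : le_k B (Ub B) x.
Proof. apply (sup_kP B (fun _ => False)); tauto. Qed.

Lemma le_k_antisym (x y : B) : le_k B x y -> le_k B y x -> x = y.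
Proof. apply (le_k_po B). Qed.

Lemma join_k_Ub_r (x : B) : join_k B x (Ub B) = x.
Proof.
  apply le_k_antisym; [|apply (join_kP B); auto].
  apply (join_kP B); intros s [->| ->]; [apply (le_k_po B) | apply Ub_le_k].
Qed.

Lemma join_k_idem (x : B) : join_k B x x = x.
Proof.
  apply le_k_antisym; [|apply (join_kP B); auto].
  apply (join_kP B); intros s [->| ->]; apply (le_k_po B).
Qed.

Variable Atom : Type.

Lemma ext_le_trans {I J L : interp B Atom} : ext_le I J -> ext_le J L -> ext_le I L.
Proof. intros hIJ hJL A hA; rewrite hIJ by exact hA; apply hJL; rewrite <- hIJ; exact hA. Qed.

Lemma equivI_ext_le (Term : Type) (I J : interp B Atom) (f : formula B Atom Term) alpha :
  ext_le I J -> equivI I f alpha -> equivI J f alpha.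
Proof. intros hIJ hI L hJL; apply hI; exact (ext_le_trans hIJ hJL). Qed.

Lemma join_k_absorb_notIF (F H : interp B Atom) A :
  ~ IFset F H A -> F A <> Ub B -> join_k B (F A) (H A) = F A.
Proof.
  intros notIF hF.
  destruct (classic (H A = Ub B)) as [hH|hH]; [rewrite hH; apply join_k_Ub_r|].
  assert (hFH : F A = H A) by (apply NNPP; intro; apply notIF; repeat split; assumption).
  rewrite <- hFH; apply join_k_idem.
Qed.

Lemma ioplus_restrict_ext_le (F H : interp B Atom) (S S' : Atom -> Prop) :
  (forall A, S A -> S' A) ->
  (forall A, S' A -> ~ S A -> F A <> Ub B -> join_k B (F A) (H A) = F A) ->
  ext_le (ioplus F (restrict H S)) (ioplus F (restrict H S')).
Proof.
  intros hSS' absorb A; unfold ioplus, restrict.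
  destruct (excluded_middle_informative (S A)) as [hS|hS];
    destruct (excluded_middle_informative (S' A)) as [hS'|hS']; try reflexivity.
  - destruct (hS' (hSS' A hS)).
  - rewrite join_k_Ub_r; intro hF; symmetry; exact (absorb A hS' hS hF).
Qed.

End Bilattice.

Section ParaconsistentFacts.
Context {B : bilattice} {Atom Term : Type} (P : program B Atom Term) (H : interp B Atom).

Definition PF_step (X : Atom -> Prop) : Atom -> Prop := fun A =>
  exists Bd, In (A, Bd) (rules P) /\
    ~ equivI (ioplus (facts P)
                (restrict H (fun A' => ~ IFset (facts P) H A' /\ ~ X A'))) Bd (H A).

Lemma PF_S i A : PF P H (S i) A <-> PF_step (PF P H i) A.
Proof. reflexivity. Qed.

Lemma PF_step_mono (X Y : Atom -> Prop) :
  (forall A, X A -> Y A) -> forall A, PF_step X A -> PF_step Y A.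
Proof.
  intros hXY A [Bd [hin hne]]; exists Bd; split; [exact hin|].
  intro hY; apply hne; revert hY; apply equivI_ext_le, ioplus_restrict_ext_le.
  - intros A' [hIF hX]; split; [exact hIF | intro hA'; exact (hX (hXY A' hA'))].
  - intros A' [hIF _] _; apply join_k_absorb_notIF; exact hIF.
Qed.

Lemma PF_in_heads i A : PF P H i A -> In A (map fst (rules P)).
Proof.
  destruct i as [|i]; [intros []|].
  intros [Bd [hin _]]; exact (in_map fst _ (A, Bd) hin).
Qed.

End ParaconsistentFacts.

Theorem mainTheorem4 (B : bilattice) (Atom Term : Type)
  (P : program B Atom Term) (H : interp B Atom) :
  (forall i A, PF P H i A -> PF P H (S i) A) /\
  (exists n, forall m, n <= m -> forall A, PF P H m A <-> PF P H n A).
Proof.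
  assert (incr : forall i A, PF P H i A -> PF P H (S i) A).
  { apply (iter_incr _ _ (PF_step_mono P H)); [intros A [] | apply PF_S]. }
  split; [exact incr|].
  destruct (chain_in_list_stabilizes (map fst (rules P)) (PF P H) incr (PF_in_heads P H))
    as [n stuck].
  exists n; apply (iter_stationary _ _ (PF_step_mono P H)); [intros A [] | apply PF_S | exact stuck].
Qed.
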